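(* For every $\alpha\in(0,1)$ and $\theta\in\mathbb R$, the elementary expectile scoring function $\mathrm S^{\rm E}_{\alpha,\theta}$ belongs to $\mathcal S^{\rm E}_{\alpha,1}$ and is an extreme point of $\mathcal S^{\rm E}_{\alpha,1}$: if $\mathrm S^{\rm E}_{\alpha,\theta}=(\mathrm S_1+\mathrm S_2)/2$ pointwise on $\mathbb R^2$ with $\mathrm S_1,\mathrm S_2\in\mathcal S^{\rm E}_{\alpha,1}$, then $\mathrm S_1=\mathrm S_2=\mathrm S^{\rm E}_{\alpha,\theta}$.
   Context: $\mathbb 1(A)$ denotes the indicator of $A$ and $(t)_+=\max(t,0)$. $\mathcal I$ is the class of left-continuous non-decreasing functions $\mathbb R\to\mathbb R$, and $\mathcal I_1=\{g\in\mathcal I:\lim_{x\to-\infty}g(x)=0,\ \lim_{x\to+\infty}g(x)=1\}$. For a convex $\phi:\mathbb R\to\mathbb R$, $\phi'$ denotes its left-hand derivative. $\mathcal C_1$ is the class of convex $\phi:\mathbb R\to\mathbb R$ with $\phi(0)=0$ and $\phi'\in\mathcal I_1$. For $\alpha\in(0,1)$, $\mathcal S^{\rm E}_{\alpha,1}$ is the (convex) class of all functions of the form $\mathrm S(x,y)=|\mathbb 1(y<x)-\alpha|\,(\phi(y)-\phi(x)-\phi'(x)(y-x))$ with $\phi\in\mathcal C_1$. The elementary expectile scoring function is $\mathrm S^{\rm E}_{\alpha,\theta}(x,y)=|\mathbb 1(y<x)-\alpha|\big((y-\theta)_+-(x-\theta)_+-(y-x)\mathbb 1(\theta<x)\big)$,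 i.e. it equals $(1-\alpha)|y-\theta|$ if $y\le\theta<x$, $\alpha|y-\theta|$ if $x\le\theta<y$, and $0$ otherwise. *)

From Stdlib Require Import Reals Lra.
Open Scope R_scope.

Definition ind_lt (y x : R) : R := if Rlt_dec y x then 1 else 0.

Definition pos_part (t : R) : R := Rmax t 0.

Definition convex (phi : R -> R) : Prop :=
  forall x y t, 0 <= t <= 1 ->
    phi (t * x + (1 - t) * y) <= t * phi x + (1 - t) * phi y.

Definition is_left_deriv (phi : R -> R) (x d : R) : Prop :=
  forall eps, 0 < eps -> exists delta, 0 < delta /\
    forall y, x - delta < y < x -> Rabs ((phi y - phi x) / (y - x) - d) < eps.

Definition nondecreasing (g : R -> R) : Prop := forall x y, x <= y -> g x <= g y.
Definition left_continuous (g : R -> R) : Prop :=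
  forall x eps, 0 < eps -> exists delta, 0 < delta /\
    forall y, x - delta < y < x -> Rabs (g y - g x) < eps.
Definition in_I (g : R -> R) : Prop := nondecreasing g /\ left_continuous g.

Definition lim_minus_infty (g : R -> R) (l : R) : Prop :=
  forall eps, 0 < eps -> exists M, forall x, x < M -> Rabs (g x - l) < eps.
Definition lim_plus_infty (g : R -> R) (l : R) : Prop :=
  forall eps, 0 < eps -> exists M, forall x, M < x -> Rabs (g x - l) < eps.
Definition in_I1 (g : R -> R) : Prop :=
  in_I g /\ lim_minus_infty g 0 /\ lim_plus_infty g 1.

Definition in_C1 (phi dphi : R -> R) : Prop :=
  convex phi /\ phi 0 = 0 /\ (forall x, is_left_deriv phi x (dphi x)) /\ in_I1 dphi.

Definition S_phi (alpha : R) (phi dphi : R -> R) (x y : R) : R :=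
  Rabs (ind_lt y x - alpha) * (phi y - phi x - dphi x * (y - x)).

Definition in_SE (alpha : R) (S : R -> R -> R) : Prop :=
  exists phi dphi, in_C1 phi dphi /\ forall x y, S x y = S_phi alpha phi dphi x y.

Definition SE_elem (alpha theta : R) (x y : R) : R :=
  Rabs (ind_lt y x - alpha) *
  (pos_part (y - theta) - pos_part (x - theta) - (y - x) * ind_lt theta x).

(* Scores in the class are weighted Bregman divergences of convex functions, and the
   weight |1(y < x) - alpha| never vanishes, so the midpoint identity can be divided
   by it.  A Bregman divergence of a convex function is nonnegative, hence if the
   elementary one is the average of two others, each of them vanishes wherever the
   elementary one does: for x, y both at most theta or both above theta.  Vanishing
   in both directions forces equal derivatives, so the derivative of each generator
   is constant on (-oo, theta] and on (theta, +oo); its limits 0 at -oo and 1 at +oo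
   pin it down to 1(theta < x), and the generator to (x - theta)_+ up to a constant. *)

From Stdlib Require Import Reals Lra Psatz.
Open Scope R_scope.

Lemma pos_part_nonpos t : t <= 0 -> pos_part t = 0.
Proof. intro; apply Rmax_right; lra. Qed.

Lemma pos_part_nonneg t : 0 <= t -> pos_part t = t.
Proof. intro; apply Rmax_left; lra. Qed.

Lemma ind_lt_true y x : y < x -> ind_lt y x = 1.
Proof. intro; unfold ind_lt; destruct (Rlt_dec y x); lra. Qed.

Lemma ind_lt_false y x : x <= y -> ind_lt y x = 0.
Proof. intro; unfold ind_lt; destruct (Rlt_dec y x); lra. Qed.

Lemma expectile_weight_pos alpha y x :
  0 < alpha < 1 -> 0 < Rabs (ind_lt y x - alpha).
Proof. intro; apply Rabs_pos_lt; unfold ind_lt; destruct (Rlt_dec y x); lra. Qed.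

Definition bregman (phi dphi : R -> R) (x y : R) : R :=
  phi y - phi x - dphi x * (y - x).

Definition hinge (theta z : R) : R := pos_part (z - theta) - pos_part (- theta).

Lemma S_phi_bregman alpha phi dphi x y :
  S_phi alpha phi dphi x y = Rabs (ind_lt y x - alpha) * bregman phi dphi x y.
Proof. reflexivity. Qed.

Lemma SE_elem_bregman alpha theta x y :
  SE_elem alpha theta x y =
  Rabs (ind_lt y x - alpha) * bregman (hinge theta) (ind_lt theta) x y.
Proof. unfold SE_elem, bregman, hinge; ring. Qed.

Lemma convex_three_points phi a b c : convex phi -> a < b < c ->
  phi b * (c - a) <= (c - b) * phi a + (b - a) * phi c.
Proof.
  intros Hconv [Hab Hbc].
  set (t := (c - b) / (c - a)).
  assert (Ht : 0 <= t <= 1).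
  { unfold t; split.
    - unfold Rdiv; apply Rmult_le_pos; [|apply Rlt_le, Rinv_0_lt_compat]; lra.
    - apply Rmult_le_reg_r with (c - a); [lra|].
      unfold Rdiv; rewrite Rmult_assoc, Rinv_l; lra. }
  specialize (Hconv a c t Ht).
  replace (t * a + (1 - t) * c) with b in Hconv by (unfold t; field; lra).
  apply Rmult_le_compat_r with (r := c - a) in Hconv; [|lra].
  replace ((t * phi a + (1 - t) * phi c) * (c - a))
    with ((c - b) * phi a + (b - a) * phi c) in Hconv by (unfold t; field; lra).
  exact Hconv.
Qed.

Lemma convex_secant_below phi z x y : convex phi -> z < x -> y <= z \/ x <= y ->
  phi x + (phi z - phi x) / (z - x) * (y - x) <= phi y.
Proof.
  intros Hconv Hzx Hy.
  assert (Hphiz : phi z = phi x + (phi z - phi x) / (z - x) * (z - x)) by (field; lra).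
  set (s := (phi z - phi x) / (z - x)) in *; clearbody s.
  destruct Hy as [[Hyz | ->] | [Hxy | <-]].
  - pose proof (convex_three_points phi y z x Hconv (conj Hyz Hzx)) as H.
    rewrite Hphiz in H.
    apply Rmult_le_reg_l with (x - z); [lra | nra].
  - lra.
  - pose proof (convex_three_points phi z x y Hconv (conj Hzx Hxy)) as H.
    rewrite Hphiz in H.
    apply Rmult_le_reg_l with (x - z); [lra | nra].
  - lra.
Qed.

(* Approximate the left derivative by the slope of a secant through a point z just
   left of x, chosen to the right of y when y < x. *)
Lemma bregman_ge_neg_eps phi dphi x y eps : convex phi ->
  is_left_deriv phi x (dphi x) -> 0 < eps ->
  - (eps * Rabs (y - x)) <= bregman phi dphi x y.
Proof.
  intros Hconv Hd Heps; unfold bregman.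
  destruct (Hd eps Heps) as [delta [Hdelta Hsecant]].
  assert (Hpoint : exists z, x - delta < z < x /\ (y <= z \/ x <= y)).
  { destruct (Rle_or_lt x y) as [Hxy | Hyx].
    - exists (x - delta / 2); split; [lra | right; lra].
    - exists (Rmax y (x - delta / 2)).
      pose proof (Rmax_l y (x - delta / 2)); pose proof (Rmax_r y (x - delta / 2)).
      split; [split; [lra | apply Rmax_lub_lt; lra] | left; lra]. }
  destruct Hpoint as [z [Hz Hyz]].
  pose proof (convex_secant_below phi z x y Hconv (proj2 Hz) Hyz) as Hsupp.
  specialize (Hsecant z Hz).
  set (s := (phi z - phi x) / (z - x)) in *; clearbody s.
  assert (Herr : Rabs ((s - dphi x) * (y - x)) <= eps * Rabs (y - x)).
  { rewrite Rabs_mult; apply Rmult_le_compat_r; [apply Rabs_pos | lra]. }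
  pose proof (Rle_abs (- ((s - dphi x) * (y - x)))) as Hneg; rewrite Rabs_Ropp in Hneg.
  nra.
Qed.

Lemma bregman_nonneg phi dphi x y : convex phi -> is_left_deriv phi x (dphi x) ->
  0 <= bregman phi dphi x y.
Proof.
  intros Hconv Hd.
  destruct (Req_dec y x) as [-> | Hyx]; [unfold bregman; lra|].
  assert (Hdist : 0 < Rabs (y - x)) by (apply Rabs_pos_lt; lra).
  apply Rle_plus_epsilon; intros eps Heps.
  pose proof (bregman_ge_neg_eps phi dphi x y (eps / Rabs (y - x))
                Hconv Hd (Rdiv_lt_0_compat _ _ Heps Hdist)) as H.
  replace (eps / Rabs (y - x) * Rabs (y - x)) with eps in H by (field; lra).
  lra.
Qed.

Lemma deriv_eq_of_bregman_eq0 phi dphi x y :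
  bregman phi dphi x y = 0 -> bregman phi dphi y x = 0 -> dphi x = dphi y.
Proof.
  unfold bregman; intros Hxy Hyx.
  destruct (Req_dec x y) as [-> | Hne]; [reflexivity|].
  assert (Hprod : (dphi y - dphi x) * (y - x) = 0) by lra.
  destruct (Rmult_integral _ _ Hprod); lra.
Qed.

Lemma hinge_convex theta : convex (hinge theta).
Proof.
  intros x y t Ht; unfold hinge, pos_part.
  pose proof (Rmax_l (x - theta) 0); pose proof (Rmax_r (x - theta) 0).
  pose proof (Rmax_l (y - theta) 0); pose proof (Rmax_r (y - theta) 0).
  enough (Rmax (t * x + (1 - t) * y - theta) 0
          <= t * Rmax (x - theta) 0 + (1 - t) * Rmax (y - theta) 0) by lra.
  apply Rmax_lub; nra.
Qed.

(* On each side of theta the hinge is affine near x, so its difference quotients are exact. *)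
Lemma hinge_left_deriv theta x : is_left_deriv (hinge theta) x (ind_lt theta x).
Proof.
  intros eps Heps; unfold hinge.
  destruct (Rle_or_lt x theta) as [Hx | Hx].
  - exists 1; split; [lra|]; intros y Hy.
    rewrite ind_lt_false, !(pos_part_nonpos (_ - theta)) by lra.
    replace ((0 - pos_part (- theta) - (0 - pos_part (- theta))) / (y - x) - 0)
      with 0 by (field; lra).
    rewrite Rabs_R0; lra.
  - exists (x - theta); split; [lra|]; intros y Hy.
    rewrite ind_lt_true, !(pos_part_nonneg (_ - theta)) by lra.
    replace ((y - theta - pos_part (- theta) - (x - theta - pos_part (- theta)))
               / (y - x) - 1) with 0 by (field; lra).
    rewrite Rabs_R0; lra.
Qed.

Lemma ind_lt_in_I1 theta : in_I1 (ind_lt theta).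
Proof.
  repeat split.
  - intros x y Hxy; unfold ind_lt.
    destruct (Rlt_dec theta x), (Rlt_dec theta y); lra.
  - intros x eps Heps.
    destruct (Rle_or_lt x theta) as [Hx | Hx].
    + exists 1; split; [lra|]; intros y Hy.
      rewrite !ind_lt_false by lra; rewrite Rminus_diag, Rabs_R0; lra.
    + exists (x - theta); split; [lra|]; intros y Hy.
      rewrite !ind_lt_true by lra; rewrite Rminus_diag, Rabs_R0; lra.
  - intros eps Heps; exists theta; intros x Hx.
    rewrite ind_lt_false by lra; rewrite Rminus_diag, Rabs_R0; lra.
  - intros eps Heps; exists theta; intros x Hx.
    rewrite ind_lt_true by lra; rewrite Rminus_diag, Rabs_R0; lra.
Qed.

Lemma hinge_in_C1 theta : in_C1 (hinge theta) (ind_lt theta).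
Proof.
  split; [apply hinge_convex|]; split.
  - unfold hinge; rewrite Rminus_0_l; ring.
  - split; [apply hinge_left_deriv | apply ind_lt_in_I1].
Qed.

Lemma SE_elem_in_SE alpha theta : in_SE alpha (SE_elem alpha theta).
Proof.
  exists (hinge theta), (ind_lt theta); split; [apply hinge_in_C1|].
  intros x y; rewrite SE_elem_bregman; reflexivity.
Qed.

Lemma bregman_hinge_eq0_le theta x y : x <= theta -> y <= theta ->
  bregman (hinge theta) (ind_lt theta) x y = 0.
Proof.
  intros; unfold bregman, hinge; rewrite ind_lt_false, !(pos_part_nonpos (_ - theta)) by lra.
  ring.
Qed.

Lemma bregman_hinge_eq0_gt theta x y : theta < x -> theta <= y ->
  bregman (hinge theta) (ind_lt theta) x y = 0.
Proof.
  intros; unfold bregman, hinge; rewrite ind_lt_true, !(pos_part_nonneg (_ - theta)) by lra.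
  ring.
Qed.

Lemma lim_minus_infty_const g a c l :
  (forall x, x <= a -> g x = c) -> lim_minus_infty g l -> c = l.
Proof.
  intros Hconst Hlim.
  destruct (Req_dec (c - l) 0) as [|Hne]; [lra | exfalso].
  destruct (Hlim _ (Rabs_pos_lt _ Hne)) as [M HM].
  specialize (HM (Rmin M a - 1)).
  pose proof (Rmin_l M a); pose proof (Rmin_r M a).
  rewrite Hconst in HM by lra; specialize (HM ltac:(lra)); lra.
Qed.

Lemma lim_plus_infty_const g a c l :
  (forall x, a < x -> g x = c) -> lim_plus_infty g l -> c = l.
Proof.
  intros Hconst Hlim.
  destruct (Req_dec (c - l) 0) as [|Hne]; [lra | exfalso].
  destruct (Hlim _ (Rabs_pos_lt _ Hne)) as [M HM].
  specialize (HM (Rmax M a + 1)).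
  pose proof (Rmax_l M a); pose proof (Rmax_r M a).
  rewrite Hconst in HM by lra; specialize (HM ltac:(lra)); lra.
Qed.

Section Rigidity.

Variables (theta : R) (phi dphi psi dpsi : R -> R).
Hypotheses (Hphi : in_C1 phi dphi) (Hpsi : in_C1 psi dpsi).
Hypothesis Hmid : forall x y, bregman (hinge theta) (ind_lt theta) x y =
  (bregman phi dphi x y + bregman psi dpsi x y) / 2.

Lemma bregman_eq0_of_hinge x y :
  bregman (hinge theta) (ind_lt theta) x y = 0 -> bregman phi dphi x y = 0.
Proof.
  destruct Hphi as [Hconv [_ [Hd _]]], Hpsi as [Hconv' [_ [Hd' _]]].
  intro H0; pose proof (Hmid x y).
  pose proof (bregman_nonneg phi dphi x y Hconv (Hd x)).
  pose proof (bregman_nonneg psi dpsi x y Hconv' (Hd' x)).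
  lra.
Qed.

Lemma deriv_const_le x : x <= theta -> dphi x = dphi theta.
Proof.
  intro; apply (deriv_eq_of_bregman_eq0 phi); apply bregman_eq0_of_hinge;
    apply bregman_hinge_eq0_le; lra.
Qed.

Lemma deriv_const_gt x y : theta < x -> theta < y -> dphi x = dphi y.
Proof.
  intros; apply (deriv_eq_of_bregman_eq0 phi); apply bregman_eq0_of_hinge;
    apply bregman_hinge_eq0_gt; lra.
Qed.

Lemma deriv_eq_ind x : dphi x = ind_lt theta x.
Proof.
  destruct Hphi as [_ [_ [_ [_ [Hlim0 Hlim1]]]]].
  destruct (Rle_or_lt x theta) as [Hx | Hx].
  - rewrite ind_lt_false, deriv_const_le by lra.
    exact (lim_minus_infty_const dphi theta _ 0 deriv_const_le Hlim0).
  - rewrite ind_lt_true by lra.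
    exact (lim_plus_infty_const dphi theta _ 1 (fun y Hy => deriv_const_gt y x Hy Hx) Hlim1).
Qed.

Lemma generator_eq_pos_part z : phi z = phi theta + pos_part (z - theta).
Proof.
  destruct (Rle_or_lt z theta) as [Hz | Hz].
  - pose proof (bregman_eq0_of_hinge theta z
                  (bregman_hinge_eq0_le theta theta z (Rle_refl _) Hz)) as H.
    unfold bregman in H; rewrite deriv_eq_ind, ind_lt_false in H by lra.
    rewrite pos_part_nonpos by lra; lra.
  - pose proof (bregman_eq0_of_hinge z theta
                  (bregman_hinge_eq0_gt theta z theta Hz (Rle_refl _))) as H.
    unfold bregman in H; rewrite deriv_eq_ind, ind_lt_true in H by lra.
    rewrite pos_part_nonneg by lra; lra.
Qed.

Lemma bregman_eq_hinge x y :
  bregman phi dphi x y = bregman (hinge theta) (ind_lt theta) x y.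
Proof.
  unfold bregman, hinge.
  rewrite (generator_eq_pos_part x), (generator_eq_pos_part y), deriv_eq_ind; ring.
Qed.

End Rigidity.

Lemma score_midpoint_bregman alpha theta phi dphi psi dpsi :
  0 < alpha < 1 ->
  (forall x y, SE_elem alpha theta x y =
     (S_phi alpha phi dphi x y + S_phi alpha psi dpsi x y) / 2) ->
  forall x y, bregman (hinge theta) (ind_lt theta) x y =
    (bregman phi dphi x y + bregman psi dpsi x y) / 2.
Proof.
  intros Halpha Hmid x y.
  specialize (Hmid x y); rewrite SE_elem_bregman, !S_phi_bregman in Hmid.
  pose proof (expectile_weight_pos alpha y x Halpha).
  apply Rmult_eq_reg_l with (Rabs (ind_lt y x - alpha)); [|lra].
  rewrite Hmid; field.
Qed.

Theorem mainTheorem4 (alpha theta : R) (Halpha : 0 < alpha < 1) :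
  in_SE alpha (SE_elem alpha theta) /\
  (forall S1 S2 : R -> R -> R,
     in_SE alpha S1 -> in_SE alpha S2 ->
     (forall x y, SE_elem alpha theta x y = (S1 x y + S2 x y) / 2) ->
     (forall x y, S1 x y = SE_elem alpha theta x y) /\
     (forall x y, S2 x y = SE_elem alpha theta x y)).
Proof.
  split; [apply SE_elem_in_SE|].
  intros S1 S2 [phi [dphi [Hphi E1]]] [psi [dpsi [Hpsi E2]]] Hmid.
  assert (Hmid_S : forall x y, SE_elem alpha theta x y =
            (S_phi alpha phi dphi x y + S_phi alpha psi dpsi x y) / 2)
    by (intros x y; rewrite <- E1, <- E2; apply Hmid).
  pose proof (score_midpoint_bregman alpha theta phi dphi psi dpsi Halpha Hmid_S) as Hbreg.
  assert (Hbreg' : forall x y, bregman (hinge theta) (ind_lt theta) x y =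
                     (bregman psi dpsi x y + bregman phi dphi x y) / 2)
    by (intros x y; rewrite Hbreg; lra).
  split; intros x y.
  - rewrite E1, S_phi_bregman, SE_elem_bregman.
    rewrite (bregman_eq_hinge theta phi dphi psi dpsi Hphi Hpsi Hbreg); reflexivity.
  - rewrite E2, S_phi_bregman, SE_elem_bregman.
    rewrite (bregman_eq_hinge theta psi dpsi phi dphi Hpsi Hphi Hbreg'); reflexivity.
Qed.
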